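(* Let $H_1,H_2\in\mathcal O$, let $\lambda_1,\dots,\lambda_N$ be the eigenvalues of $H_2$ with orthonormal eigenvectors $\psi_1,\dots,\psi_N$, and assume (i) $(H_1\psi_k,\psi_j)\ne0$ for all $k\ne j$ and (ii) $\lambda_k-\lambda_l\ne\lambda_{k'}-\lambda_{l'}$ for all ordered pairs $(k,l)\ne(k',l')$. Then $E_{k,j}\in\mathcal L(H_1,H_2)$ for all $k\neq j\in\{1,\dots,N\}$.
   Context: $\mathcal H=\mathbb C^N$, $N>1$; $\mathcal O$ is the real vector space of Hermitian operators with bracket $\{A,B\}=i(AB-BA)$; $\mathcal L(H_1,H_2)$ is the real linear span of $H_1,H_2$ and all iterated brackets of them. $E_{k,j}$ is the Hermitian operator with $(E_{k,j}\psi_{k'},\psi_{j'})=1$ if $k'=j'=k$, $=-1$ if $k'=j'=j$, and $=0$ otherwise (i.e. diagonal in the basis $\psi_1,\dots,\psi_N$ with entry $1$ at $k$, $-1$ at $j$). *)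

From HB Require Import structures.
From mathcomp Require Import all_boot all_order all_algebra.
Set Implicit Arguments. Unset Strict Implicit. Unset Printing Implicit Defensive.
Import Order.TTheory GRing.Theory Num.Theory.
Local Open Scope ring_scope.

Section Defs.
Variable C : numClosedFieldType.

Definition adjmx (m n : nat) (A : 'M[C]_(m, n)) : 'M[C]_(n, m) :=
  (map_mx Num.conj A)^T.

Definition is_hermitian (N : nat) (A : 'M[C]_N) : Prop := adjmx A = A.

(* inner product (x, y) = sum_i x_i * conj(y_i), linear in the first slot *)
Definition inner (N : nat) (x y : 'cV[C]_N) : C :=
  \sum_(i < N) x i 0 * (y i 0)^*.

Definition lbr (N : nat) (A B : 'M[C]_N) : 'M[C]_N :=
  'i *: (A *m B - B *m A).

Inductive iter_bracket (N : nat) (H1 H2 : 'M[C]_N) : 'M[C]_N -> Prop :=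
| ib_H1 : iter_bracket H1 H2 H1
| ib_H2 : iter_bracket H1 H2 H2
| ib_br A B : iter_bracket H1 H2 A -> iter_bracket H1 H2 B ->
              iter_bracket H1 H2 (lbr A B).

Definition lie_span (N : nat) (H1 H2 : 'M[C]_N) (X : 'M[C]_N) : Prop :=
  exists s : seq (C * 'M[C]_N),
    (forall p, p \in s -> p.1 \is Num.real /\ iter_bracket H1 H2 p.2) /\
    X = \sum_(p <- s) p.1 *: p.2.

(* E_{k,j} relative to the orthonormal basis given by the columns of U:
   psi_k psi_k^* - psi_j psi_j^* *)
Definition Emx (N : nat) (U : 'M[C]_N) (k j : 'I_N) : 'M[C]_N :=
  col k U *m adjmx (col k U) - col j U *m adjmx (col j U).

End Defs.

From HB Require Import structures.
From mathcomp Require Import all_boot all_order all_algebra.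
From mathcomp Require Import ring.
Set Implicit Arguments. Unset Strict Implicit. Unset Printing Implicit Defensive.
Import Order.TTheory GRing.Theory Num.Theory.
Local Open Scope ring_scope.

(** In the eigenbasis of [H2], [H2] becomes the real diagonal matrix [D] of
    the eigenvalues and [H1] a Hermitian matrix [M] with no zero off-diagonal
    entry.  Bracketing with [D] multiplies the entry [(a, b)] by
    [i (lambda_a - lambda_b)], so the real operator [ad_D^2 + c] multiplies it
    by [c - (lambda_a - lambda_b)^2].  Because the gaps [lambda_a - lambda_b]
    are pairwise distinct, a product of such operators kills every entry of [M]
    except [(k, l)] and [(l, k)], leaving
    [X = M_kl e_kl + M_lk e_lk] in [L(H1, H2)].  Then
    [{X, {D, X}} = 2 |M_kl|^2 (lambda_k - lambda_l) (e_kk - e_ll)], a nonzero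
    real multiple of [E_kl]. *)

Lemma mulCii (C : numClosedFieldType) : 'i * 'i = -1 :> C.
Proof. by rewrite -expr2 sqrCi. Qed.

Section Bracket.
Variables (C : numClosedFieldType) (N : nat).
Implicit Types (A B : 'M[C]_N) (a : C).

Lemma lbrDl A A' B : lbr (A + A') B = lbr A B + lbr A' B.
Proof. by rewrite /lbr mulmxDl mulmxDr -scalerDr opprD addrACA. Qed.

Lemma lbrDr A B B' : lbr A (B + B') = lbr A B + lbr A B'.
Proof. by rewrite /lbr mulmxDl mulmxDr -scalerDr opprD addrACA. Qed.

Lemma lbrZl a A B : lbr (a *: A) B = a *: lbr A B.
Proof. by rewrite /lbr -scalemxAl -scalemxAr -scalerBr !scalerA mulrC. Qed.

Lemma lbrZr a A B : lbr A (a *: B) = a *: lbr A B.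
Proof. by rewrite /lbr -scalemxAl -scalemxAr -scalerBr !scalerA mulrC. Qed.

Lemma lbrxx A : lbr A A = 0.
Proof. by rewrite /lbr subrr scaler0. Qed.

Lemma lbr_suml (s : seq (C * 'M[C]_N)) B :
  lbr (\sum_(p <- s) p.1 *: p.2) B = \sum_(p <- s) p.1 *: lbr p.2 B.
Proof.
elim: s => [|p s IH]; last by rewrite !big_cons lbrDl lbrZl IH.
by rewrite !big_nil /lbr mul0mx mulmx0 subrr scaler0.
Qed.

Lemma lbr_sumr (s : seq (C * 'M[C]_N)) A :
  lbr A (\sum_(p <- s) p.1 *: p.2) = \sum_(p <- s) p.1 *: lbr A p.2.
Proof.
elim: s => [|p s IH]; last by rewrite !big_cons lbrDr lbrZr IH.
by rewrite !big_nil /lbr mul0mx mulmx0 subrr scaler0.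
Qed.

Lemma lbr_delta (k l : 'I_N) :
  lbr (delta_mx k l : 'M[C]_N) (delta_mx l k) = 'i *: (delta_mx k k - delta_mx l l).
Proof. by rewrite /lbr !mul_delta_mx. Qed.

End Bracket.

Section LieSpan.
Variables (C : numClosedFieldType) (N : nat) (H1 H2 : 'M[C]_N).
Implicit Types X Y : 'M[C]_N.

Lemma lie_span_gen X : iter_bracket H1 H2 X -> lie_span H1 H2 X.
Proof.
move=> hX; exists [:: (1, X)]; rewrite big_seq1 scale1r; split => // p.
by rewrite inE => /eqP -> /=; split => //; apply: rpred1.
Qed.

Lemma lie_spanD X Y :
  lie_span H1 H2 X -> lie_span H1 H2 Y -> lie_span H1 H2 (X + Y).
Proof.
move=> [s [hs ->]] [t [ht ->]]; exists (s ++ t); rewrite big_cat; split => // p.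
by rewrite mem_cat => /orP [/hs|/ht].
Qed.

Lemma lie_spanZ (a : C) X :
  a \is Num.real -> lie_span H1 H2 X -> lie_span H1 H2 (a *: X).
Proof.
move=> ha [s [hs ->]]; exists [seq (a * p.1, p.2) | p <- s]; split.
  by move=> q /mapP [p /hs [hp1 hp2] ->]; split => //; apply: rpredM.
by rewrite big_map scaler_sumr; apply: eq_bigr => p _; rewrite scalerA.
Qed.

Lemma lie_span_lbr X Y :
  lie_span H1 H2 X -> lie_span H1 H2 Y -> lie_span H1 H2 (lbr X Y).
Proof.
move=> [s [hs ->]] [t [ht ->]].
exists [seq (p.1 * q.1, lbr p.2 q.2) | p <- s, q <- t]; split.
  move=> r /allpairsP [[p q] [/hs [hp1 hp2] /ht [hq1 hq2] ->]] /=.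
  by split; [apply: rpredM | apply: ib_br].
rewrite big_allpairs_dep lbr_suml; apply: eq_bigr => p _.
rewrite lbr_sumr scaler_sumr; apply: eq_bigr => q _.
by rewrite scalerA.
Qed.

End LieSpan.

Section DiagonalGaps.
Variables (C : numClosedFieldType) (N : nat) (lam : 'I_N -> C).
Hypothesis lam_real : forall a, lam a \is Num.real.
Hypothesis gap_inj : forall k l k' l' : 'I_N, k != l -> k' != l' ->
  (k, l) != (k', l') -> lam k - lam l != lam k' - lam l'.

Let D : 'M[C]_N := diag_mx (\row_i lam i).
Let gap a b := lam a - lam b.

Lemma gap_real a b : gap a b \is Num.real.
Proof. exact: rpredB. Qed.

Lemma gapC a b : gap b a = - gap a b.
Proof. by rewrite /gap opprB. Qed.

Lemma gap_neq0 k l : k != l -> gap k l != 0.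
Proof.
move=> kl; have lk : l != k by rewrite eq_sym.
have /gap_inj : (k, l) != (l, k) by rewrite xpair_eqE (negbTE kl).
move=> /(_ kl lk); rewrite -/(gap k l) -/(gap l k) [gap l k]gapC.
by apply: contraNneq => ->; rewrite oppr0.
Qed.

Lemma lbr_diag_mxE X a b : lbr D X a b = 'i * gap a b * X a b.
Proof. by rewrite /lbr /D mul_diag_mx mul_mx_diag !mxE /gap; ring. Qed.

Lemma lbr_diag_delta a b :
  lbr D (delta_mx a b) = ('i * gap a b) *: delta_mx a b.
Proof.
apply/matrixP => x y; rewrite lbr_diag_mxE !mxE.
by case: eqP => [->|_]; case: eqP => [->|_]; rewrite ?mulr0 ?mulr1.
Qed.

Definition ad2_shift (c : C) X := lbr D (lbr D X) + c *: X.

Definition ad2_filter (cs : seq C) X := foldr ad2_shift X cs.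

Lemma ad2_filterE cs X a b :
  ad2_filter cs X a b = (\prod_(c <- cs) (c - gap a b ^+ 2)) * X a b.
Proof.
elim: cs => [|c cs IH] /=; first by rewrite big_nil mul1r.
rewrite big_cons mxE !lbr_diag_mxE mxE IH.
ring: (@mulCii C).
Qed.

(* The leading [0] annihilates the diagonal entries. *)
Definition pair_filter (k l : 'I_N) : seq C :=
  0 :: [seq gap p.1 p.2 ^+ 2 | p <- enum [pred p : 'I_N * 'I_N |
         [&& p.1 != p.2, p != (k, l) & p != (l, k)]]].

Lemma pair_filter_real k l : all (fun c => c \is Num.real) (pair_filter k l).
Proof.
rewrite /= rpred0; apply/allP => c /mapP [p _ ->]; exact/rpredX/gap_real.
Qed.

Lemma pair_filter_vanish k l a b : (a, b) != (k, l) -> (a, b) != (l, k) ->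
  \prod_(c <- pair_filter k l) (c - gap a b ^+ 2) = 0.
Proof.
move=> nkl nlk; apply/eqP; rewrite prodf_seq_eq0; apply/hasP.
case: (eqVneq a b) => [<-|ab].
  by exists 0; rewrite ?mem_head //= /gap subrr expr0n subrr.
exists (gap a b ^+ 2); last by rewrite /= subrr.
rewrite /pair_filter in_cons; apply/orP; right.
by apply/mapP; exists (a, b); rewrite // mem_enum inE /= ab nkl nlk.
Qed.

Lemma pair_filter_neq0 k l : k != l ->
  \prod_(c <- pair_filter k l) (c - gap k l ^+ 2) != 0.
Proof.
move=> kl; rewrite prodf_seq_eq0; apply/hasPn => c.
rewrite inE => /orP [/eqP ->|/mapP [[a b]]].
  by rewrite /= sub0r oppr_eq0 expf_eq0 gap_neq0.
rewrite mem_enum inE /= => /and3P [ab nkl nlk] ->.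
rewrite subr_sqr mulf_eq0 negb_or subr_eq0 addr_eq0 -gapC.
by apply/andP; split; apply: gap_inj; rewrite // eq_sym.
Qed.

Lemma lbr_pair k l (x y : C) :
  let X := x *: delta_mx k l + y *: delta_mx l k in
  lbr X (lbr D X) = (2 * x * y * gap k l) *: (delta_mx k k - delta_mx l l).
Proof.
rewrite /= lbrDr !lbrZr !lbr_diag_delta !lbrDl !lbrDr !lbrZl !lbrZr !lbrxx.
rewrite !lbr_delta gapC; apply/matrixP => a b; rewrite !mxE.
ring: (@mulCii C).
Qed.

Variable P : 'M[C]_N -> Prop.
Hypothesis P_D : P D.
Hypothesis P_add : forall X Y, P X -> P Y -> P (X + Y).
Hypothesis P_scale : forall (a : C) X, a \is Num.real -> P X -> P (a *: X).
Hypothesis P_lbr : forall X Y, P X -> P Y -> P (lbr X Y).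

Lemma ad2_filter_closed cs X :
  all (fun c => c \is Num.real) cs -> P X -> P (ad2_filter cs X).
Proof.
elim: cs => [|c cs IH] //= /andP [hc hcs] hX.
by apply: P_add; [apply/P_lbr/P_lbr/IH | apply/P_scale/IH].
Qed.

Variable M : 'M[C]_N.
Hypothesis P_M : P M.
Hypothesis M_herm : is_hermitian M.
Hypothesis M_offdiag : forall a b, a != b -> M a b != 0.

Lemma isolate_pair k l :
  k != l -> P (M k l *: delta_mx k l + M l k *: delta_mx l k).
Proof.
move=> kl; set kap := \prod_(c <- pair_filter k l) (c - gap k l ^+ 2).
have kapR : kap \is Num.real.
  rewrite /kap big_seq; apply: rpred_prod => c /(allP (pair_filter_real k l)) cR.
  by rewrite rpredB ?rpredX ?gap_real.
have filterM : ad2_filter (pair_filter k l) M =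
    kap *: (M k l *: delta_mx k l + M l k *: delta_mx l k).
  apply/matrixP => a b; rewrite ad2_filterE !mxE.
  case: (eqVneq (a, b) (k, l)) => [[-> ->]|nkl].
    by rewrite !eqxx (negbTE kl) eq_sym (negbTE kl) /= mulr1 mulr0 addr0 mulrC.
  case: (eqVneq (a, b) (l, k)) => [[-> ->]|nlk].
    rewrite gapC sqrrN !eqxx (negbTE kl) eq_sym (negbTE kl) /=.
    by rewrite mulr1 mulr0 add0r mulrC.
  by rewrite pair_filter_vanish // -!xpair_eqE (negbTE nkl) (negbTE nlk) mul0r !mulr0 addr0 mulr0.
have -> : M k l *: delta_mx k l + M l k *: delta_mx l k =
    kap^-1 *: ad2_filter (pair_filter k l) M.
  by rewrite filterM scalerA mulVf ?scale1r ?pair_filter_neq0.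
by apply: P_scale; [rewrite rpredV | apply/ad2_filter_closed/P_M/pair_filter_real].
Qed.

Lemma diag_delta_closed k l : k != l -> P (delta_mx k k - delta_mx l l).
Proof.
move=> kl; set c := 2 * M k l * M l k * gap k l.
have herm_kl : M l k = (M k l)^* by have /matrixP/(_ l k) := M_herm; rewrite !mxE.
have cR : c \is Num.real.
  rewrite /c herm_kl -(mulrA 2) rpredM ?gap_real // rpredM ?rpred_nat //.
  by apply/ger0_real; rewrite mul_conjC_ge0.
have c0 : c != 0.
  rewrite /c !mulf_neq0 ?pnatr_eq0 ?M_offdiag ?gap_neq0 //.
  by rewrite eq_sym.
have -> : delta_mx k k - delta_mx l l = c^-1 *: (c *: (delta_mx k k - delta_mx l l)).
  by rewrite scalerA mulVf ?scale1r.
rewrite -lbr_pair; apply: P_scale; first by rewrite rpredV.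
have PX := isolate_pair kl; exact: P_lbr PX (P_lbr P_D PX).
Qed.

End DiagonalGaps.

Section BasisChange.
Variables (C : numClosedFieldType) (N : nat) (U : 'M[C]_N).

Lemma adjmxM m n p (A : 'M[C]_(m, n)) (B : 'M[C]_(n, p)) :
  adjmx (A *m B) = adjmx B *m adjmx A.
Proof. by rewrite /adjmx map_mxM trmx_mul. Qed.

Lemma adjmxK m n (A : 'M[C]_(m, n)) : adjmx (adjmx A) = A.
Proof. by apply/matrixP => a b; rewrite !mxE conjCK. Qed.

Lemma col_mulmx m n p (A : 'M[C]_(m, n)) (B : 'M[C]_(n, p)) j :
  col j (A *m B) = A *m col j B.
Proof. by rewrite !colE mulmxA. Qed.

Lemma herm_adj_conj H :
  is_hermitian H -> is_hermitian (adjmx U *m H *m U).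
Proof. by move=> hH; rewrite /is_hermitian !adjmxM adjmxK hH mulmxA. Qed.

Lemma conjmxD X Y :
  U *m (X + Y) *m adjmx U = U *m X *m adjmx U + U *m Y *m adjmx U.
Proof. by rewrite mulmxDr mulmxDl. Qed.

Lemma conjmxZ (a : C) X : U *m (a *: X) *m adjmx U = a *: (U *m X *m adjmx U).
Proof. by rewrite -scalemxAr -scalemxAl. Qed.

Lemma inner_mulmx_col (H : 'M[C]_N) k j :
  inner (H *m col k U) (col j U) = (adjmx U *m H *m U) j k.
Proof.
rewrite -mulmxA mxE; apply: eq_bigr => i _.
by rewrite colE mulmxA -colE !mxE mulrC.
Qed.

Lemma Emx_conjmx k j :
  Emx U k j = U *m (delta_mx k k - delta_mx j j) *m adjmx U.
Proof.
have proj c : col c U *m adjmx (col c U) = U *m delta_mx c c *m adjmx U.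
  have adj_delta : adjmx (delta_mx c 0 : 'cV[C]_N) = delta_mx 0 c.
    by apply/matrixP => x y; rewrite !mxE conjC_nat andbC.
  by rewrite colE adjmxM adj_delta mulmxA -(mulmxA U) mul_delta_mx.
by rewrite /Emx !proj mulmxBr mulmxBl.
Qed.

Hypothesis U_unitary : adjmx U *m U = 1%:M.

Lemma unitary_mulmx_adj : U *m adjmx U = 1%:M.
Proof. exact: mulmx1C. Qed.

Lemma conj_unitaryK X : U *m (adjmx U *m X *m U) *m adjmx U = X.
Proof.
by rewrite !mulmxA unitary_mulmx_adj mul1mx -mulmxA unitary_mulmx_adj mulmx1.
Qed.

Lemma conj_unitary_lbr X Y :
  U *m lbr X Y *m adjmx U = lbr (U *m X *m adjmx U) (U *m Y *m adjmx U).
Proof.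
have mulC Z T : U *m Z *m adjmx U *m (U *m T *m adjmx U) = U *m (Z *m T) *m adjmx U.
  by rewrite -!mulmxA [adjmx U *m (U *m _)]mulmxA U_unitary mul1mx !mulmxA.
by rewrite /lbr !mulC conjmxZ mulmxBr mulmxBl.
Qed.

Lemma eigen_conj_unitary (H : 'M[C]_N) (lam : 'I_N -> C) :
  (forall k, H *m col k U = lam k *: col k U) ->
  adjmx U *m H *m U = diag_mx (\row_i lam i).
Proof.
move=> hEig; have HU : H *m U = U *m diag_mx (\row_i lam i).
  apply/matrixP => a b; have := congr1 (fun A : 'cV[C]_N => A a 0) (hEig b).
  by rewrite /= -col_mulmx mxE => ->; rewrite mul_mx_diag !mxE mulrC.
by rewrite -mulmxA HU mulmxA U_unitary mul1mx.
Qed.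

End BasisChange.

Theorem mainTheorem8 (C : numClosedFieldType) (N : nat) (hN : (1 < N)%N)
  (H1 H2 : 'M[C]_N) (hH1 : is_hermitian H1) (hH2 : is_hermitian H2)
  (U : 'M[C]_N) (lambda : 'I_N -> C)
  (hON : adjmx U *m U = 1%:M)
  (hEig : forall k : 'I_N, H2 *m col k U = lambda k *: col k U)
  (hi : forall k j : 'I_N, k != j -> inner (H1 *m col k U) (col j U) != 0)
  (hii : forall k l k' l' : 'I_N, k != l -> k' != l' -> (k, l) != (k', l') ->
           lambda k - lambda l != lambda k' - lambda l') :
  forall k j : 'I_N, k != j -> lie_span H1 H2 (Emx U k j).
Proof.
move=> k j kj; rewrite Emx_conjmx.
pose P Y := lie_span H1 H2 (U *m Y *m adjmx U).
have hD := eigen_conj_unitary hON hEig.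
have lam_real a : lambda a \is Num.real.
  have /matrixP/(_ a a) := herm_adj_conj U hH2.
  by rewrite hD !mxE eqxx mulr1n CrealE => ->.
have M_offdiag a b : a != b -> (adjmx U *m H1 *m U) a b != 0.
  by move=> ab; rewrite -inner_mulmx_col hi // eq_sym.
have P_D : P (diag_mx (\row_i lambda i)).
  by rewrite /P -hD conj_unitaryK //; apply/lie_span_gen/ib_H2.
have P_M : P (adjmx U *m H1 *m U).
  by rewrite /P conj_unitaryK //; apply/lie_span_gen/ib_H1.
apply: (diag_delta_closed lam_real hii P_D _ _ _ P_M (herm_adj_conj U hH1) M_offdiag kj).
- by move=> X Y; rewrite /P conjmxD; apply: lie_spanD.
- by move=> a X; rewrite /P conjmxZ; apply: lie_spanZ.
- by move=> X Y; rewrite /P conj_unitary_lbr //; apply: lie_span_lbr.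
Qed.
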